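(* Let $I\subset\mathbb{R}$ be an open interval, let $\bm{a}:I\to\mathbb{R}^2_1$ be a (spacelike or timelike) frontal with Gauss mapping $\bm{\nu}:I\to H^1$ (or $S^1_1$), and let $r:I\to\mathbb{R}^+$ be a smooth positive function. Then the pseudo-circle family $C_{(\bm{a}(t),\pm r(t))}$ creates an envelope if and only if $C_{(\bm{a}(t),\pm r(t))}$ is creative.
   Context: All objects are $C^\infty$. The Minkowski plane $\mathbb{R}^2_1$ is $\mathbb{R}^2$ with the pseudo-scalar product $\langle\bm{x},\bm{y}\rangle=-x_1y_1+x_2y_2$. Set $S^1_1=\{\bm{x}:\langle\bm{x},\bm{x}\rangle=1\}$ and $H^1=\{\bm{x}:\langle\bm{x},\bm{x}\rangle=-1\}$. For a non-lightlike vector $\bm{x}$, $\epsilon_{\bm{x}}=1$ if $\langle\bm{x},\bm{x}\rangle>0$ and $\epsilon_{\bm{x}}=-1$ if $\langle\bm{x},\bm{x}\rangle<0$. A smooth curve $\bm{a}:I\to\mathbb{R}^2_1$ is a spacelike (resp. timelike) frontal if there is a smooth map $\bm{\nu}:I\to H^1$ (resp. $S^1_1$), the Gauss mapping, with $\langle \frac{d\bm{a}}{dt}(t),\bm{\nu}(t)\rangle=0$ for all $t$. Let $\bm{\mu}:I\to S^1_1$ (resp. $H^1$) be a smooth unit vector field with $\langle\bm{\mu},\bm{\nu}\rangle=0$; then $\frac{d\bm{a}}{dt}(t)=\beta(t)\bm{\mu}(t)$ where $\beta(t)=\epsilon_{\bm{\mu}}\langle\bm{\mu}(t),\frac{d\bm{a}}{dt}(t)\rangle$.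 For a positive function $r$, the pseudo-circle families are $C_{(\bm{a}(t),r(t))}=\{\bm{x}:\langle\bm{x}-\bm{a}(t),\bm{x}-\bm{a}(t)\rangle=r(t)^2\}$ and $C_{(\bm{a}(t),-r(t))}=\{\bm{x}:\langle\bm{x}-\bm{a}(t),\bm{x}-\bm{a}(t)\rangle=-r(t)^2\}$. An envelope of $C_{(\bm{a}(t),\pm r(t))}$ is a smooth map $f:I\to\mathbb{R}^2_1$ with (1) $f(t)\in C_{(\bm{a}(t),\pm r(t))}$ and (2) $\langle\frac{df}{dt}(t),f(t)-\bm{a}(t)\rangle=0$ for all $t\in I$. The family $C_{(\bm{a}(t),r(t))}$ is creative if there is a smooth $\tilde{\bm{\nu}}:I\to S^1_1$ with $\frac{dr}{dt}(t)+\beta(t)\langle\tilde{\bm{\nu}}(t),\bm{\mu}(t)\rangle=0$ for all $t$; the family $C_{(\bm{a}(t),-r(t))}$ is creative if there is a smooth $\tilde{\bm{\nu}}:I\to H^1$ with $\frac{dr}{dt}(t)-\beta(t)\langle\tilde{\bm{\nu}}(t),\bm{\mu}(t)\rangle=0$ for all $t$. *)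

From Stdlib Require Import Reals.
From Coquelicot Require Import Coquelicot.
Open Scope R_scope.

Definition mink (x y : R * R) : R := - fst x * fst y + snd x * snd y.
Definition vsub (x y : R * R) : R * R := (fst x - fst y, snd x - snd y).

Definition in_S11 (x : R * R) : Prop := mink x x = 1.
Definition in_H1 (x : R * R) : Prop := mink x x = -1.

Definition eps (x : R * R) : R := if Rlt_dec 0 (mink x x) then 1 else -1.

Definition open_int (lo hi : Rbar) (t : R) : Prop := Rbar_lt lo t /\ Rbar_lt t hi.

Definition smooth_on (I : R -> Prop) (f : R -> R) : Prop :=
  forall (n : nat) (t : R), I t -> ex_derive_n f n t.

Definition smooth_curve (I : R -> Prop) (c : R -> R * R) : Prop :=
  smooth_on I (fun t => fst (c t)) /\ smooth_on I (fun t => snd (c t)).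

Definition dcurve (c : R -> R * R) (t : R) : R * R :=
  (Derive (fun s => fst (c s)) t, Derive (fun s => snd (c s)) t).

Definition gauss_map (spacelike : bool) (I : R -> Prop) (a nu : R -> R * R) : Prop :=
  smooth_curve I nu /\
  (forall t, I t -> (if spacelike then in_H1 (nu t) else in_S11 (nu t))) /\
  (forall t, I t -> mink (dcurve a t) (nu t) = 0).

Definition unit_tangent (spacelike : bool) (I : R -> Prop) (nu mu : R -> R * R) : Prop :=
  smooth_curve I mu /\
  (forall t, I t -> (if spacelike then in_S11 (mu t) else in_H1 (mu t))) /\
  (forall t, I t -> mink (mu t) (nu t) = 0).

Definition beta (a mu : R -> R * R) (t : R) : R := eps (mu t) * mink (mu t) (dcurve a t).

(* Envelope of C_(a(t), r(t)) (s = 1) or C_(a(t), -r(t)) (s = -1). *)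
Definition is_envelope (I : R -> Prop) (s : R) (a : R -> R * R) (r : R -> R)
  (f : R -> R * R) : Prop :=
  smooth_curve I f /\
  (forall t, I t -> mink (vsub (f t) (a t)) (vsub (f t) (a t)) = s * (r t) ^ 2) /\
  (forall t, I t -> mink (dcurve f t) (vsub (f t) (a t)) = 0).

Definition creates_envelope (I : R -> Prop) (s : R) (a : R -> R * R) (r : R -> R) : Prop :=
  exists f, is_envelope I s a r f.

Definition creative_plus (I : R -> Prop) (a mu : R -> R * R) (r : R -> R) : Prop :=
  exists nt : R -> R * R, smooth_curve I nt /\
    (forall t, I t -> in_S11 (nt t)) /\
    (forall t, I t -> Derive r t + beta a mu t * mink (nt t) (mu t) = 0).

Definition creative_minus (I : R -> Prop) (a mu : R -> R * R) (r : R -> R) : Prop :=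
  exists nt : R -> R * R, smooth_curve I nt /\
    (forall t, I t -> in_H1 (nt t)) /\
    (forall t, I t -> Derive r t - beta a mu t * mink (nt t) (mu t) = 0).

From Stdlib Require Import Reals Lra Lia.
From Coquelicot Require Import Coquelicot.
Open Scope R_scope.

(* An envelope [f] amounts to the unit field [nt = (f - a) / r], which has the
   causal character [s = +-1] of the pseudo-circles.  Differentiating
   [<f - a, f - a> = s r^2] gives [<f', f - a> = r (<a', nt> + s r')], so
   condition (2) reads [s r' + <a', nt> = 0]; conversely [a + r nt] is an
   envelope for every unit field [nt] solving this equation.  Finally [a'] and
   [mu] both lie in the orthogonal line of the non-null [nu], whence
   [a' = beta mu] and [<a', nt> = beta <mu, nt>], turning the equation into
   the creativity condition. *)

Lemma Derive_n_Derive f n x : Derive_n (Derive f) n x = Derive_n f (S n) x.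
Proof.
  revert x; induction n as [|n IH]; intro x; simpl; [reflexivity|].
  apply Derive_ext; intro y. now rewrite IH.
Qed.

Section FiniteOrderSmoothness.

Variable U : R -> Prop.
Hypothesis U_open : open U.

Definition Cn (n : nat) (f : R -> R) : Prop :=
  forall k, (k <= n)%nat -> forall t, U t -> ex_derive_n f k t.

Lemma Cn_le m n f : (m <= n)%nat -> Cn n f -> Cn m f.
Proof. intros Hmn Hf k Hk. apply Hf; lia. Qed.

Lemma Cn_ex_derive n f t : Cn (S n) f -> U t -> ex_derive f t.
Proof. intros Hf Ht. exact (Hf 1%nat ltac:(lia) t Ht). Qed.

Lemma Cn_Derive n f : Cn (S n) f -> Cn n (Derive f).
Proof.
  intros Hf [|k] Hk t Ht; [exact I|].
  apply (ex_derive_ext (Derive_n f (S k))).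
  - intro y. now rewrite Derive_n_Derive.
  - exact (Hf (S (S k)) ltac:(lia) t Ht).
Qed.

Lemma Cn_S n f :
  (forall t, U t -> ex_derive f t) -> Cn n (Derive f) -> Cn (S n) f.
Proof.
  intros Hf HDf [|[|k]] Hk t Ht; [exact I | now apply Hf |].
  apply (ex_derive_ext (Derive_n (Derive f) k)).
  - intro y. now rewrite Derive_n_Derive.
  - exact (HDf (S k) ltac:(lia) t Ht).
Qed.

Lemma Cn_ext n f g : (forall t, U t -> f t = g t) -> Cn n f -> Cn n g.
Proof.
  intros Hfg Hf k Hk t Ht. apply (ex_derive_n_ext_loc f).
  - apply (filter_imp U); [exact Hfg | exact (U_open t Ht)].
  - now apply Hf.
Qed.

Lemma Cn_locally n k f t : (k <= n)%nat -> Cn n f -> U t ->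
  locally t (fun y => forall j, (j <= k)%nat -> ex_derive_n f j y).
Proof.
  intros Hk Hf Ht. apply (filter_imp U); [|exact (U_open t Ht)].
  intros y Hy j Hj. apply Hf; [lia | exact Hy].
Qed.

Lemma Cn_plus n f g : Cn n f -> Cn n g -> Cn n (fun x => f x + g x).
Proof.
  intros Hf Hg k Hk t Ht.
  apply ex_derive_n_plus; eapply Cn_locally; eauto.
Qed.

Lemma Cn_opp n f : Cn n f -> Cn n (fun x => - f x).
Proof. intros Hf k Hk t Ht. apply ex_derive_n_opp. now apply Hf. Qed.

Lemma Cn_mult n : forall f g, Cn n f -> Cn n g -> Cn n (fun x => f x * g x).
Proof.
  induction n as [|n IH]; intros f g Hf Hg.
  - intros k Hk t Ht. replace k with 0%nat by lia. exact I.
  - apply Cn_S.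
    + intros t Ht. apply ex_derive_mult; eapply Cn_ex_derive; eauto.
    + apply (Cn_ext _ (fun x => Derive f x * g x + f x * Derive g x)).
      { intros t Ht. rewrite Derive_mult; [reflexivity | |];
          eapply Cn_ex_derive; eauto. }
      apply Cn_plus; apply IH; auto using Cn_Derive; apply (Cn_le _ (S n)); auto.
Qed.

Lemma Cn_inv n : forall f, Cn n f -> (forall t, U t -> f t <> 0) ->
  Cn n (fun x => / f x).
Proof.
  induction n as [|n IH]; intros f Hf Hnz.
  - intros k Hk t Ht. replace k with 0%nat by lia. exact I.
  - apply Cn_S.
    + intros t Ht. apply ex_derive_inv; [eapply Cn_ex_derive | apply Hnz]; eauto.
    + apply (Cn_ext _ (fun x => - (Derive f x * (/ f x * / f x)))).
      { intros t Ht. rewrite Derive_inv.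
        - field. now apply Hnz.
        - eapply Cn_ex_derive; eauto.
        - now apply Hnz. }
      apply Cn_opp, Cn_mult; [now apply Cn_Derive|].
      apply Cn_mult; apply IH; auto; apply (Cn_le _ (S n)); auto.
Qed.

Lemma smooth_on_Cn f : smooth_on U f <-> forall n, Cn n f.
Proof.
  split.
  - intros Hf n k _ t Ht. now apply Hf.
  - intros Hf n t Ht. exact (Hf n n (le_n n) t Ht).
Qed.

Lemma smooth_on_ex_derive f t : smooth_on U f -> U t -> ex_derive f t.
Proof. intros Hf. apply (Cn_ex_derive 0), smooth_on_Cn, Hf. Qed.

Lemma smooth_on_plus f g :
  smooth_on U f -> smooth_on U g -> smooth_on U (fun x => f x + g x).
Proof. rewrite !smooth_on_Cn. intros Hf Hg n. now apply Cn_plus. Qed.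

Lemma smooth_on_minus f g :
  smooth_on U f -> smooth_on U g -> smooth_on U (fun x => f x - g x).
Proof. rewrite !smooth_on_Cn. intros Hf Hg n. now apply Cn_plus, Cn_opp. Qed.

Lemma smooth_on_mult f g :
  smooth_on U f -> smooth_on U g -> smooth_on U (fun x => f x * g x).
Proof. rewrite !smooth_on_Cn. intros Hf Hg n. now apply Cn_mult. Qed.

Lemma smooth_on_inv f : smooth_on U f -> (forall t, U t -> f t <> 0) ->
  smooth_on U (fun x => / f x).
Proof. rewrite !smooth_on_Cn. intros Hf Hnz n. now apply Cn_inv. Qed.

End FiniteOrderSmoothness.

Definition vadd (x y : R * R) : R * R := (fst x + fst y, snd x + snd y).
Definition vscal (c : R) (x : R * R) : R * R := (c * fst x, c * snd x).

Lemma mink_sym x y : mink x y = mink y x.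
Proof. unfold mink; ring. Qed.

Lemma mink_vscal_r c x y : mink x (vscal c y) = c * mink x y.
Proof. unfold mink, vscal; simpl; ring. Qed.

Lemma mink_vscal c x y : mink (vscal c x) (vscal c y) = c ^ 2 * mink x y.
Proof. unfold mink, vscal; simpl; ring. Qed.

Lemma mink_vsub_l x y z : mink (vsub x y) z = mink x z - mink y z.
Proof. unfold mink, vsub; simpl; ring. Qed.

Lemma vsub_vadd_l x y : vsub (vadd x y) x = y.
Proof. destruct x, y; unfold vsub, vadd; simpl; f_equal; ring. Qed.

Lemma vscal_inv_r c x : c <> 0 -> vscal c (vscal (/ c) x) = x.
Proof. intros Hc; destruct x; unfold vscal; simpl; f_equal; field; exact Hc. Qed.

Lemma Derive_mink_self (c : R -> R * R) t :
  ex_derive (fun x => fst (c x)) t -> ex_derive (fun x => snd (c x)) t ->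
  Derive (fun x => mink (c x) (c x)) t = 2 * mink (dcurve c t) (c t).
Proof.
  intros H1 H2. unfold mink, dcurve; simpl.
  rewrite Derive_plus, !Derive_mult, Derive_opp;
    auto using ex_derive_mult, ex_derive_opp.
  ring.
Qed.

Lemma dcurve_vsub (f g : R -> R * R) t :
  ex_derive (fun x => fst (f x)) t -> ex_derive (fun x => snd (f x)) t ->
  ex_derive (fun x => fst (g x)) t -> ex_derive (fun x => snd (g x)) t ->
  dcurve (fun x => vsub (f x) (g x)) t = vsub (dcurve f t) (dcurve g t).
Proof.
  intros. unfold dcurve, vsub; simpl. now rewrite !Derive_minus.
Qed.

Section Curves.

Variable U : R -> Prop.
Hypothesis U_open : open U.

Lemma smooth_curve_ex_derive c t : smooth_curve U c -> U t ->
  ex_derive (fun x => fst (c x)) t /\ ex_derive (fun x => snd (c x)) t.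
Proof. intros [] Ht. split; eapply smooth_on_ex_derive; eauto. Qed.

Lemma smooth_curve_vadd c d : smooth_curve U c -> smooth_curve U d ->
  smooth_curve U (fun x => vadd (c x) (d x)).
Proof. intros [] []; split; apply smooth_on_plus; auto. Qed.

Lemma smooth_curve_vsub c d : smooth_curve U c -> smooth_curve U d ->
  smooth_curve U (fun x => vsub (c x) (d x)).
Proof. intros [] []; split; apply smooth_on_minus; auto. Qed.

Lemma smooth_curve_vscal r c : smooth_on U r -> smooth_curve U c ->
  smooth_curve U (fun x => vscal (r x) (c x)).
Proof. intros ? []; split; apply smooth_on_mult; auto. Qed.

Lemma mink_dcurve_radius s f a r t :
  smooth_curve U f -> smooth_curve U a -> smooth_on U r ->
  (forall x, U x -> mink (vsub (f x) (a x)) (vsub (f x) (a x)) = s * r x ^ 2) ->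
  U t ->
  mink (dcurve f t) (vsub (f t) (a t))
  = mink (dcurve a t) (vsub (f t) (a t)) + s * r t * Derive r t.
Proof.
  intros Hf Ha Hr Hfa Ht.
  destruct (smooth_curve_ex_derive f t Hf Ht) as [Df1 Df2].
  destruct (smooth_curve_ex_derive a t Ha Ht) as [Da1 Da2].
  destruct (smooth_curve_ex_derive _ t (smooth_curve_vsub f a Hf Ha) Ht) as [Dg1 Dg2].
  assert (E : Derive (fun x => mink (vsub (f x) (a x)) (vsub (f x) (a x))) t
              = Derive (fun x => s * r x ^ 2) t).
  { apply Derive_ext_loc. apply (filter_imp U); [exact Hfa | exact (U_open t Ht)]. }
  rewrite Derive_mink_self, dcurve_vsub, mink_vsub_l in E by assumption.
  assert (Dr : Derive (fun x => s * r x ^ 2) t = 2 * s * r t * Derive r t).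
  { apply is_derive_unique. auto_derive; [eapply smooth_on_ex_derive; eauto|].
    change (Derive (fun x => r x) t) with (Derive r t). ring. }
  lra.
Qed.

Lemma creates_envelope_iff s a r :
  smooth_curve U a -> smooth_on U r -> (forall t, U t -> r t <> 0) ->
  creates_envelope U s a r <->
  exists nt, smooth_curve U nt /\ (forall t, U t -> mink (nt t) (nt t) = s) /\
    (forall t, U t -> s * Derive r t + mink (dcurve a t) (nt t) = 0).
Proof.
  intros Ha Hr Hr0. split.
  - intros [f [Hf [Hfa Hff]]].
    set (nt x := vscal (/ r x) (vsub (f x) (a x))).
    assert (Hfa_nt : forall x, U x -> vsub (f x) (a x) = vscal (r x) (nt x)).
    { intros x Hx. symmetry. now apply vscal_inv_r, Hr0. }
    exists nt. split; [|split].
    + apply smooth_curve_vscal; [now apply smooth_on_inv | now apply smooth_curve_vsub].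
    + intros t Ht. apply (Rmult_eq_reg_l (r t ^ 2)); [|apply pow_nonzero; auto].
      rewrite <- mink_vscal, <- Hfa_nt, Hfa by assumption. ring.
    + intros t Ht.
      pose proof (mink_dcurve_radius s f a r t Hf Ha Hr Hfa Ht) as E.
      rewrite Hff, Hfa_nt, mink_vscal_r in E by assumption.
      apply (Rmult_eq_reg_l (r t)); [lra | auto].
  - intros [nt [Hnt [Hnn Hs]]].
    set (f x := vadd (a x) (vscal (r x) (nt x))).
    assert (Hfa : forall x, vsub (f x) (a x) = vscal (r x) (nt x))
      by (intro x; apply vsub_vadd_l).
    assert (Hf : smooth_curve U f)
      by (apply smooth_curve_vadd, smooth_curve_vscal; assumption).
    assert (Hrad : forall x, U x ->
              mink (vsub (f x) (a x)) (vsub (f x) (a x)) = s * r x ^ 2).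
    { intros x Hx. rewrite Hfa, mink_vscal, Hnn by assumption. ring. }
    exists f. split; [exact Hf | split; [exact Hrad|]].
    intros t Ht.
    rewrite (mink_dcurve_radius s f a r t Hf Ha Hr Hrad Ht), Hfa, mink_vscal_r.
    replace (s * r t * Derive r t) with (r t * (s * Derive r t)) by ring.
    rewrite <- Rmult_plus_distr_l, Rplus_comm, Hs by assumption. ring.
Qed.

End Curves.

(* The orthogonal complement of a nonzero vector is a line, so [m] and [v]
   are collinear. *)
Lemma mink_orthogonal_collinear n m v w : n <> (0, 0) ->
  mink m n = 0 -> mink v n = 0 -> mink m m * mink v w = mink m v * mink m w.
Proof.
  destruct n as [n1 n2], m as [m1 m2], v as [v1 v2], w as [w1 w2].
  unfold mink; simpl. intros Hn Hm Hv.
  assert (Hdet : v1 * m2 - v2 * m1 = 0).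
  { assert (E1 : (v1 * m2 - v2 * m1) * n1 = 0).
    { transitivity (v2 * (- m1 * n1 + m2 * n2) - m2 * (- v1 * n1 + v2 * n2));
        [ring | rewrite Hm, Hv; ring]. }
    assert (E2 : (v1 * m2 - v2 * m1) * n2 = 0).
    { transitivity (v1 * (- m1 * n1 + m2 * n2) - m1 * (- v1 * n1 + v2 * n2));
        [ring | rewrite Hm, Hv; ring]. }
    destruct (Req_dec n1 0) as [->|H1].
    - destruct (Req_dec n2 0) as [->|H2]; [contradiction|].
      now apply Rmult_integral in E2 as [|].
    - now apply Rmult_integral in E1 as [|]. }
  apply Rminus_diag_uniq.
  transitivity ((v1 * m2 - v2 * m1) * (m1 * w2 - m2 * w1)); [ring|].
  rewrite Hdet; ring.
Qed.

Lemma eps_mult_self x : mink x x = 1 \/ mink x x = -1 -> eps x * mink x x = 1.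
Proof. unfold eps. intros [H|H]; rewrite H; destruct (Rlt_dec 0 _); lra. Qed.

Lemma unit_nonzero x : mink x x = 1 \/ mink x x = -1 -> x <> (0, 0).
Proof. intros H ->. unfold mink in H; simpl in H. lra. Qed.

Lemma mink_dcurve_frontal spacelike (I : R -> Prop) a nu mu t w :
  gauss_map spacelike I a nu -> unit_tangent spacelike I nu mu -> I t ->
  mink (dcurve a t) w = beta a mu t * mink (mu t) w.
Proof.
  intros [_ [Hnu Hanu]] [_ [Hmu Hmunu]] Ht.
  assert (Hnu1 : mink (nu t) (nu t) = 1 \/ mink (nu t) (nu t) = -1)
    by (specialize (Hnu t Ht); destruct spacelike; auto).
  assert (Hmu1 : mink (mu t) (mu t) = 1 \/ mink (mu t) (mu t) = -1)
    by (specialize (Hmu t Ht); destruct spacelike; auto).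
  pose proof (mink_orthogonal_collinear (nu t) (mu t) (dcurve a t) w
                (unit_nonzero _ Hnu1) (Hmunu t Ht) (Hanu t Ht)) as Hcol.
  unfold beta.
  rewrite Rmult_assoc, <- Hcol, <- Rmult_assoc, eps_mult_self by exact Hmu1.
  ring.
Qed.

Theorem theorem1 (lo hi : Rbar) (spacelike : bool) (a nu mu : R -> R * R) (r : R -> R) :
  Rbar_lt lo hi ->
  smooth_curve (open_int lo hi) a ->
  gauss_map spacelike (open_int lo hi) a nu ->
  unit_tangent spacelike (open_int lo hi) nu mu ->
  smooth_on (open_int lo hi) r ->
  (forall t, open_int lo hi t -> 0 < r t) ->
  (creates_envelope (open_int lo hi) 1 a r <-> creative_plus (open_int lo hi) a mu r) /\
  (creates_envelope (open_int lo hi) (-1) a r <-> creative_minus (open_int lo hi) a mu r).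
Proof.
  intros _ Ha Hg Hm Hr Hpos.
  assert (I_open : open (open_int lo hi))
    by exact (open_and _ _ (open_Rbar_gt lo) (open_Rbar_lt hi)).
  assert (Hr0 : forall t, open_int lo hi t -> r t <> 0)
    by (intros t Ht; specialize (Hpos t Ht); lra).
  assert (Htangent : forall nt t, open_int lo hi t ->
            mink (dcurve a t) (nt t) = beta a mu t * mink (nt t) (mu t)).
  { intros nt t Ht.
    now rewrite (mink_dcurve_frontal spacelike _ a nu mu t (nt t) Hg Hm Ht),
      (mink_sym (mu t)). }
  unfold creative_plus, creative_minus, in_S11, in_H1.
  split; rewrite creates_envelope_iff by assumption;
    split; intros [nt [Hnt [Hnn Heq]]]; exists nt;
    (split; [exact Hnt | split; [exact Hnn |]]);
    intros t Ht; specialize (Heq t Ht); rewrite Htangent in * by exact Ht; lra.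
Qed.
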